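(* Let $d\in\mathbb{N}$, and let $x,y\in\mathbb{R}^d$. The sets $\Pi$, $\Pi^{y}$ and $\Phi(x)$ are coanalytic, and hence Lebesgue measurable.
   Context: For $z\in\mathbb{R}^d$, $\|z\|$ denotes the sup-norm distance from $z$ to $\mathbb{Z}^d$. Write $\mathbb{N}=\{1,2,\dots\}$. For $\psi:\mathbb{N}\to\mathbb{R}_{\ge 0}$, let $W(\psi)$ be the set of pairs $(x,y)\in\mathbb{R}^d\times\mathbb{R}^d$ for which $\|nx+y\|<\psi(n)$ holds for infinitely many $n\in\mathbb{N}$. $\mathcal{D}$ is the set of all non-increasing $\psi:\mathbb{N}\to\mathbb{R}_{\ge0}$ with $\sum_n\psi(n)^d=\infty$, and $\Pi=\bigcap_{\psi\in\mathcal{D}}W(\psi)$. The vertical fiber is $\Phi(x)=\{y\in\mathbb{R}^d:(x,y)\in\Pi\}$ and the horizontal fiber is $\Pi^{y}=\{x\in\mathbb{R}^d:(x,y)\in\Pi\}$. Definitions from descriptive set theory: - A set is analytic if it is the projection of a Borel subset of $\mathbb{N}^{\mathbb{N}}\times X$, where $X$ is the ambient Euclidean space. - A set is coanalytic if its complement is analytic. *)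

From HB Require Import structures.
From mathcomp Require Import all_boot all_order all_algebra.
From mathcomp Require Import all_classical all_reals all_analysis.
Import Order.TTheory GRing.Theory Num.Theory.
Import numFieldNormedType.Exports.
Local Open Scope classical_set_scope.
Local Open Scope ring_scope.

(* Points of R^d are row vectors 'rV[R]_d; the norm `|.| on 'rV[R]_d in
   MathComp-Analysis is the sup norm (mx_norm = max of |coordinates|). *)

Definition intvec (R : realType) (d : nat) : set 'rV[R]_d :=
  [set k | forall i, k ord0 i \is a Num.int].
Definition distZ (R : realType) (d : nat) (z : 'rV[R]_d) : R :=
  inf [set `|z - k| | k in intvec R d].

Definition W (R : realType) (d : nat) (psi : nat -> R) : set ('rV[R]_d * 'rV[R]_d) :=
  [set xy | infinite_set [set n : nat | (0 < n)%N /\ distZ R d (n%:R *: xy.1 + xy.2) < psi n]].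

(* D: non-increasing psi : N -> R_{>=0} with sum_{n>=1} psi(n)^d = oo.
   psi is a function on nat; only its values on N = {1,2,...} matter. *)
Definition inD (R : realType) (d : nat) (psi : nat -> R) : Prop :=
  (forall n, (0 < n)%N -> 0 <= psi n) /\
  (forall m n, (0 < m)%N -> (m <= n)%N -> psi n <= psi m) /\
  (\sum_(1 <= n <oo) ((psi n) ^+ d)%:E = +oo)%E.

Definition Pi (R : realType) (d : nat) : set ('rV[R]_d * 'rV[R]_d) :=
  [set xy | forall psi, inD R d psi -> W R d psi xy].

Definition Phi (R : realType) (d : nat) (x : 'rV[R]_d) : set 'rV[R]_d :=
  [set y | Pi R d (x, y)].
Definition Pi_hfib (R : realType) (d : nat) (y : 'rV[R]_d) : set 'rV[R]_d :=
  [set x | Pi R d (x, y)].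

Definition borel_set (T : topologicalType) (B : set T) : Prop := <<s open >> B.

Notation baire := {ptws nat -> nat}.

Definition analytic (X : topologicalType) (A : set X) : Prop :=
  exists B : set (baire * X), borel_set (baire * X)%type B /\ A = snd @` B.
Definition coanalytic (X : topologicalType) (A : set X) : Prop :=
  analytic X (~` A).

Definition box (R : realType) (n : nat) (a b : 'rV[R]_n) : set 'rV[R]_n :=
  [set z | forall i, a ord0 i <= z ord0 i < b ord0 i].
Definition box_vol (R : realType) (n : nat) (a b : 'rV[R]_n) : R :=
  \prod_(i < n) Num.max 0 (b ord0 i - a ord0 i).

Definition lebesgue_outer (R : realType) (n : nat) (A : set 'rV[R]_n) : \bar R :=
  ereal_inf [set (\sum_(0 <= k <oo) (box_vol R n (ab.1 k) (ab.2 k))%:E)%E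
            | ab in [set ab : (nat -> 'rV[R]_n) * (nat -> 'rV[R]_n)
                     | A `<=` \bigcup_k box R n (ab.1 k) (ab.2 k)]].

Definition lebesgue_measurable (R : realType) (n : nat) (A : set 'rV[R]_n) : Prop :=
  forall E : set 'rV[R]_n,
    lebesgue_outer R n E = (lebesgue_outer R n (E `&` A) + lebesgue_outer R n (E `&` ~` A))%E.

(* Subsets of R^d x R^d, identified with R^(d+d) via (x,y) |-> row_mx x y. *)
Definition lebesgue_measurable2 (R : realType) (d : nat) (A : set ('rV[R]_d * 'rV[R]_d)) : Prop :=
  lebesgue_measurable R (d + d) [set z | A (lsubmx z, rsubmx z)].

From HB Require Import structures.
From mathcomp Require Import all_boot all_order all_algebra.
From mathcomp Require Import all_classical all_reals all_analysis.
From mathcomp Require Import lra.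
Import Order.TTheory GRing.Theory Num.Theory.
Import numFieldNormedType.Exports.
Local Open Scope classical_set_scope.
Local Open Scope ring_scope.

(* A pair (x, y) lies outside Pi exactly when some psi in D satisfies
   psi n <= ||n x + y|| for all n > N, for some N. The largest non-increasing
   function with this property is the running minimum
   n |-> min_{N < m <= n} ||m x + y||, so (x, y) is outside Pi iff for some N
   the series of d-th powers of this running minimum diverges. Its partial sums
   are continuous in (x, y), so the complement of Pi is a countable union of
   G_delta sets. Hence Pi and, through the continuous slice maps, its fibres are
   Borel, in particular coanalytic. Borel sets are Lebesgue measurable: a
   half-space cuts every box of a cover into two boxes whose volumes add up, so
   half-spaces are Caratheodory measurable, and open sets are countable unions
   of boxes with rational corners. *)

Section borel_set.
Context {X : topologicalType}.
Implicit Types A : set X.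

Lemma open_borel_set A : open A -> borel_set X A.
Proof. exact: sub_sigma_algebra. Qed.

Lemma borel_setC A : borel_set X A -> borel_set X (~` A).
Proof. by move=> hA; rewrite -setTD; exact: sigma_algebraCD. Qed.

Lemma borel_set_bigcup (F : (set X)^nat) :
  (forall i, borel_set X (F i)) -> borel_set X (\bigcup_i F i).
Proof. exact: sigma_algebra_bigcup. Qed.

Lemma borel_set_bigcap (F : (set X)^nat) :
  (forall i, borel_set X (F i)) -> borel_set X (\bigcap_i F i).
Proof.
move=> hF; rewrite -(setCK (\bigcap_i F i)) setC_bigcap.
by apply: borel_setC; apply: borel_set_bigcup => i; exact: borel_setC.
Qed.

Lemma borel_set_preimage [Y : topologicalType] [f : X -> Y] [B : set Y] :
  continuous f -> borel_set Y B -> borel_set X (f @^-1` B).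
Proof.
move=> cf; apply: (smallest_sub (X := [set B | borel_set X (f @^-1` B)])).
  split => [|C hC|F hF] /=.
  - by rewrite preimage_set0; exact: sigma_algebra0.
  - by rewrite setTD preimage_setC; exact: borel_setC.
  - by rewrite preimage_bigcup; exact: borel_set_bigcup.
by move=> C oC; apply: open_borel_set; exact: (proj1 (continuousP f) cf).
Qed.

End borel_set.

Lemma borel_analytic (X : topologicalType) (A : set X) : borel_set X A -> analytic X A.
Proof.
move=> hA; exists [set p : baire * X | A p.2]; split.
  have csnd : continuous (@snd baire X) by move=> p; exact: cvg_snd.
  exact: borel_set_preimage csnd hA.
apply/seteqP; split => [x Ax|_ [p Ap <-]] //.
by exists (fun=> 0%N, x).
Qed.

Lemma continuous_pair (T U V : topologicalType) (f : T -> U) (g : T -> V) :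
  continuous f -> continuous g -> continuous (fun t => (f t, g t)).
Proof. by move=> cf cg t; apply: cvg_pair; [exact: cf | exact: cg]. Qed.

Section distZ.
Variables (R : realType) (d : nat).
Implicit Types z w k : 'rV[R]_d.

Let dist_set z := [set `|z - k| | k in intvec R d].

Let dist_set_neq0 z : dist_set z !=set0.
Proof. by exists `|z - 0|, 0 => // i; rewrite mxE. Qed.

Lemma distZ_ge0 z : 0 <= distZ R d z.
Proof. by apply: lb_le_inf (dist_set_neq0 z) _ => _ [k _ <-]. Qed.

Lemma distZ_le z k : intvec R d k -> distZ R d z <= `|z - k|.
Proof. by move=> hk; apply: ge_inf; [exists 0 => _ [? _ <-] | exists k]. Qed.

Lemma distZ_lipschitz z w : distZ R d z <= distZ R d w + `|z - w|.
Proof.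
rewrite -lerBlDr; apply: lb_le_inf (dist_set_neq0 w) _ => _ [k hk <-].
rewrite lerBlDr (le_trans (distZ_le z k hk)) // -(subrKA w) [leRHS]addrC.
exact: ler_normD.
Qed.

Lemma continuous_distZ : continuous (distZ R d).
Proof.
move=> z; apply/(cvgrPdist_lt (F := nbhs z)) => e e0.
apply: filterS (nbhsx_ballx z e e0) => w; rewrite -ball_normE /= => hw.
have := distZ_lipschitz z w; have := distZ_lipschitz w z.
by rewrite distrC ltr_norml; move: hw; rewrite distrC; lra.
Qed.

End distZ.

Lemma nneseries_pinftyP (R : realType) (u : nat -> R) (a : nat) :
  (forall n, (a <= n)%N -> 0 <= u n) ->
  (\sum_(a <= n <oo) (u n)%:E = +oo)%E <->
  forall M : R, exists K, M < \sum_(a <= n < K) u n.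
Proof.
move=> u0; have u0E n : (a <= n)%N -> true -> (0 <= (u n)%:E)%E.
  by move=> an _; rewrite lee_fin u0.
split => [sumoo M|unbdd].
  have := is_cvg_nneseries u0E; rewrite sumoo => /cvgey_gt/(_ M) [K _ hK].
  by exists K; have := hK K (leqnn K); rewrite /= sumEFin lte_fin.
apply: eq_infty => M; have [K hK] := unbdd M.
by apply: le_trans (nneseries_lim_ge K u0E); rewrite sumEFin lee_fin ltW.
Qed.

Lemma nneseries_tail_pinfty [R : realType] [u : nat -> R] [a b : nat] :
  (a <= b)%N -> (forall n, (a <= n)%N -> 0 <= u n) ->
  (\sum_(b <= n <oo) (u n)%:E = +oo <-> \sum_(a <= n <oo) (u n)%:E = +oo)%E.
Proof.
move=> ab u0; have u0E k : (a <= k)%N -> (0 <= (u k)%:E)%E.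
  by move=> ak; rewrite lee_fin u0.
rewrite (nneseries_split _ (b - a) u0E) subnKC // sumEFin.
by case: (\sum_(b <= n <oo) _)%E.
Qed.

Lemma borel_set_nneseries_pinfty (R : realType) (X : topologicalType)
    (u : nat -> X -> R) (a : nat) :
  (forall n, continuous (u n)) -> (forall n t, 0 <= u n t) ->
  borel_set X [set t | (\sum_(a <= n <oo) (u n t)%:E = +oo)%E].
Proof.
move=> cu u0.
have -> : [set t | (\sum_(a <= n <oo) (u n t)%:E = +oo)%E] =
    \bigcap_M \bigcup_K [set t | M%:R < \sum_(a <= n < K) u n t].
  apply/seteqP; split => t /=.
    move=> /nneseries_pinftyP unbdd M _.
    by have [K] := unbdd (fun n _ => u0 n t) M%:R; exists K.
  move=> unbdd; apply/nneseries_pinftyP => [n _|M]; first exact: u0.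
  have [K _ MK] := unbdd (Num.truncn M).+1 I.
  by exists K; apply: lt_trans MK; exact: truncnS_gt.
apply: borel_set_bigcap => M; apply: borel_set_bigcup => K; apply: open_borel_set.
apply: (proj1 (continuousP _) _ _ (@open_gt R M%:R)).
by apply: continuous_big => [|n _]; [exact: add_continuous | exact: cu].
Qed.

Lemma finite_set_nat_bounded (A : set nat) : finite_set A -> exists N, A `<=` `I_N.
Proof.
move=> fA; exists (\max_(n <- finmap.enum_fset (fset_set A)) n).+1 => n An /=.
by rewrite ltnS (@leq_bigmax_seq _ _ _ id n) // in_fset_set // inE.
Qed.

Section running_min.
Context {disp : Order.disp_t} {T : orderType disp}.
Implicit Types f : nat -> T.

Definition running_min f (N n : nat) : T := \big[Order.min/f N]_(N <= m < n.+1) f m.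

Lemma running_min_le f N m n : (N <= m <= n)%N -> (running_min f N n <= f m)%O.
Proof. by move=> mn; apply: ge_bigmin_seq; rewrite // mem_index_iota ltnS. Qed.

Lemma running_min_ge f N n c : (c <= f N)%O ->
  (forall m, (N <= m <= n)%N -> (c <= f m)%O) -> (c <= running_min f N n)%O.
Proof.
move=> cfN cf; rewrite /running_min big_nat_cond.
by apply: le_bigmin => // m /andP[/andP[Nm mn] _]; apply: cf; rewrite Nm -ltnS.
Qed.

Lemma running_min_anti f N : {homo running_min f N : m n / (m <= n)%N >-> (n <= m)%O}.
Proof. by move=> m n mn; apply: le_bigmin_nat. Qed.

End running_min.

Lemma continuous_running_min {disp : Order.disp_t} {T : orderTopologicalType disp}
    {X : topologicalType} (F : nat -> X -> T) (N n : nat) :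
  (forall m, continuous (F m)) -> continuous (fun t => running_min (F^~ t) N n).
Proof.
move=> cF; rewrite /running_min; elim: (index_iota N n.+1) => [|m r IH].
  by rewrite (funext (fun t => big_nil _ _ _ _)).
rewrite (funext (fun t => big_cons _ _ _ _ _ _)).
exact: min_fun_continuous.
Qed.

Section Pi_complement.
Variables (R : realType) (d : nat).
Implicit Types xy : 'rV[R]_d * 'rV[R]_d.

Definition orbit_distZ xy (n : nat) : R := distZ R d (n%:R *: xy.1 + xy.2).

(* The largest non-increasing function below orbit_distZ xy on [N, oo). *)
Definition Pi_minorant (N : nat) xy : nat -> R := running_min (orbit_distZ xy) N.

Lemma continuous_orbit_distZ n : continuous (orbit_distZ ^~ n).
Proof.
move=> xy; apply: (@continuous_comp _ _ _ (fun xy => n%:R *: xy.1 + xy.2)).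
  apply: continuousD; last exact: cvg_snd.
  by apply: continuousZl_tmp; exact: cvg_fst.
exact: continuous_distZ.
Qed.

Lemma Pi_minorant_ge0 N xy n : 0 <= Pi_minorant N xy n.
Proof. by apply: running_min_ge => [|m _]; exact: distZ_ge0. Qed.

Lemma notin_Pi_minorant_pinfty xy : ~ Pi R d xy ->
  exists N, (\sum_(N.+1 <= n <oo) (Pi_minorant N.+1 xy n ^+ d)%:E = +oo)%E.
Proof.
move=> /existsNP [psi /not_implyP [[psi_ge0 [psi_anti psi_pinfty]] /contrapT]].
move=> /finite_set_nat_bounded [N hits]; exists N.
have psi_le n : (N < n)%N -> psi n <= orbit_distZ xy n.
  move=> Nn; rewrite leNgt; apply/negP => lt_n.
  by have /= := hits n (conj (leq_ltn_trans (leq0n N) Nn) lt_n); rewrite ltnNge ltnW.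
have psi_le_min n : (N < n)%N -> psi n <= Pi_minorant N.+1 xy n.
  move=> Nn; apply: running_min_ge => [|m /andP[Nm mn]].
    exact: le_trans (psi_anti N.+1 n isT Nn) (psi_le _ (ltnSn N)).
  exact: le_trans (psi_anti m n (leq_ltn_trans (leq0n N) Nm) mn) (psi_le m Nm).
move: psi_pinfty => /(nneseries_tail_pinfty (ltn0Sn N)
  (fun n n0 => exprn_ge0 d (psi_ge0 n n0))) psi_pinfty.
apply/eqP; rewrite -leye_eq -psi_pinfty [leLHS]eseries_cond [leRHS]eseries_cond.
have n_gt0 n : (N < n)%N -> (0 < n)%N by exact: leq_ltn_trans (leq0n N).
apply: lee_nneseries => [n _ /= Nn|n /= Nn]; rewrite lee_fin.
  by rewrite exprn_ge0 // psi_ge0 // n_gt0.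
by rewrite lerXn2r ?nnegrE ?psi_le_min ?psi_ge0 ?n_gt0 ?Pi_minorant_ge0.
Qed.

Lemma Pi_minorant_pinfty_notin_Pi xy N :
  (\sum_(N.+1 <= n <oo) (Pi_minorant N.+1 xy n ^+ d)%:E = +oo)%E -> ~ Pi R d xy.
Proof.
move=> min_pinfty inPi.
have min_inD : inD R d (Pi_minorant N.+1 xy).
  split; [|split] => [n _|m n _|]; first exact: Pi_minorant_ge0.
    exact: running_min_anti.
  apply/(nneseries_tail_pinfty (isT : (0 < N.+1)%N)) => // n _.
  by rewrite exprn_ge0 // Pi_minorant_ge0.
apply: (inPi _ min_inD); apply: sub_finite_set (finite_II N.+1) => n [_ /= lt_min].
rewrite ltnNge; apply/negP => Nn; move: lt_min; apply/negP; rewrite -leNgt.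
by apply: running_min_le; rewrite Nn leqnn.
Qed.

Lemma setC_Pi : ~` Pi R d =
  \bigcup_N [set xy | (\sum_(N.+1 <= n <oo) (Pi_minorant N.+1 xy n ^+ d)%:E = +oo)%E].
Proof.
apply/seteqP; split => [xy /notin_Pi_minorant_pinfty [N] pinfty|xy [N _] pinfty].
  by exists N.
exact: Pi_minorant_pinfty_notin_Pi pinfty.
Qed.

Lemma borel_set_setC_Pi : borel_set _ (~` Pi R d).
Proof.
rewrite setC_Pi; apply: borel_set_bigcup => N.
apply: borel_set_nneseries_pinfty => [n|n xy]; last by rewrite exprn_ge0 // Pi_minorant_ge0.
move=> xy; apply: (@continuous_comp _ _ _ (Pi_minorant N.+1 ^~ n) (fun r : R => r ^+ d)).
  exact: (continuous_running_min _ N.+1 n continuous_orbit_distZ xy).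
exact: exprn_continuous.
Qed.

End Pi_complement.

Section box.
Context {R : realType} {n : nat}.
Implicit Types (a b z : 'rV[R]_n) (i : 'I_n).

Definition row_upd z i (v : R) : 'rV[R]_n := \row_j (if j == i then v else z ord0 j).

Lemma box_row_upd a b z i v : box R n a b z -> a ord0 i <= v < b ord0 i ->
  box R n a b (row_upd z i v).
Proof. by move=> abz abv j; rewrite mxE; case: eqP => [->|_]. Qed.

Lemma box_vol_ge0 a b : 0 <= box_vol R n a b.
Proof. by apply: prodr_ge0 => i _; rewrite le_max lexx. Qed.

Lemma box_vol_eq0 a b : box R n a b = set0 -> box_vol R n a b = 0.
Proof.
move=> box0; have [i ba] : exists i, b ord0 i <= a ord0 i.
  apply/not_existsP => lt_ab; suff : box R n a b a by rewrite box0.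
  by move=> i; rewrite lexx ltNge; apply/negP; exact: lt_ab.
by rewrite /box_vol (bigD1 i) //= max_l ?subr_le0 // mul0r.
Qed.

Lemma box_corners_le [a b a' b' z] : box R n a b = box R n a' b' -> box R n a b z ->
  forall i, a' ord0 i <= a ord0 i /\ b ord0 i <= b' ord0 i.
Proof.
move=> eqab abz i; have /andP[azi zbi] := abz i.
have a'b'z : box R n a' b' z by rewrite -eqab.
have /andP[a'zi zb'i] := a'b'z i.
split.
  have : box R n a' b' (row_upd z i (a ord0 i)).
    by rewrite -eqab; apply: box_row_upd; rewrite // lexx (le_lt_trans azi).
  by move=> /(_ i) /andP[+ _]; rewrite mxE eqxx.
rewrite leNgt; apply/negP => b'b.
have : box R n a' b' (row_upd z i (b' ord0 i)).
  by rewrite -eqab; apply: box_row_upd; rewrite // b'b (le_trans azi) ?ltW.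
by move=> /(_ i) /andP[_]; rewrite mxE eqxx ltxx.
Qed.

Lemma eq_box [a b a' b' z] : box R n a b = box R n a' b' -> box R n a b z ->
  a = a' /\ b = b'.
Proof.
move=> eqab abz; have a'b'z : box R n a' b' z by rewrite -eqab.
have le1 := box_corners_le eqab abz; have le2 := box_corners_le (esym eqab) a'b'z.
split; apply/rowP => i; apply/le_anti.
  by rewrite (le2 i).1 (le1 i).1.
by rewrite (le1 i).2 (le2 i).2.
Qed.

Lemma eq_box_vol [a b a' b'] : box R n a b = box R n a' b' ->
  box_vol R n a b = box_vol R n a' b'.
Proof.
move=> eqab; have [[z abz]|/nonemptyPn box0] := pselect (box R n a b !=set0).
  by have [-> ->] := eq_box eqab abz.
by rewrite !box_vol_eq0 // -eqab.
Qed.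

Lemma box_vol_split a b i c : box_vol R n a b =
  box_vol R n a (row_upd b i (Num.min (b ord0 i) c)) +
  box_vol R n (row_upd a i (Num.max (a ord0 i) c)) b.
Proof.
have split_len (x y : R) : Num.max 0 (y - x) =
    Num.max 0 (Num.min y c - x) + Num.max 0 (y - Num.max x c).
  by rewrite /Num.max /Num.min; repeat case: ifPn; rewrite ?ltNge ?negbK; lra.
rewrite /box_vol (bigD1 i) //= [X in _ = X + _](bigD1 i) //= [X in _ = _ + X](bigD1 i) //=.
rewrite !mxE !eqxx split_len mulrDl.
by congr (_ * _ + _ * _); apply: eq_bigr => j ji; rewrite !mxE (negbTE ji).
Qed.

End box.

Section lebesgue_outer_measure.
Variables (R : realType) (n : nat).
(* For n = 0 the only box is the whole (one-point) space, of volume 1, so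
   lebesgue_outer set0 would be +oo. *)
Hypothesis n_gt0 : (0 < n)%N.
Local Open Scope ereal_scope.

(* All sets are measurable in cover_space, so mu_ext box_content is the infimum
   over arbitrary countable covers; box_content is the volume on boxes (well
   defined by eq_box_vol) and +oo elsewhere. *)
Local Notation cover_space := (g_sigma_algebraType [set: set 'rV[R]_n]).

Definition box_content (A : set cover_space) : \bar R :=
  ereal_inf [set (box_vol R n ab.1 ab.2)%:E | ab in [set ab | box R n ab.1 ab.2 = A]].

Lemma box_contentE a b : box_content (box R n a b) = (box_vol R n a b)%:E.
Proof.
rewrite /box_content (_ : [set _ | _ in _] = [set (box_vol R n a b)%:E]) ?ereal_inf1 //.
apply/seteqP; split => [_ [[a' b'] /= eqab <-]|_ ->]; last by exists (a, b).
by rewrite /= (eq_box_vol eqab).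
Qed.

Lemma box_content_ge0 A : 0 <= box_content A.
Proof. by apply: le_ereal_inf_tmp => _ [ab _ <-]; rewrite lee_fin box_vol_ge0. Qed.

Lemma box_content0 : box_content set0 = 0.
Proof.
have box00 : box R n 0 0 = set0.
  apply/seteqP; split => // z /(_ (Ordinal n_gt0)).
  by rewrite !mxE => /andP[/le_lt_trans/[apply]]; rewrite ltxx.
by rewrite -box00 box_contentE box_vol_eq0.
Qed.

Lemma lebesgue_outerE : lebesgue_outer R n = mu_ext box_content.
Proof.
apply/funext => A; apply/le_anti/andP; split.
  apply: le_ereal_inf_tmp => _ [F [_ AF] <-].
  have [[k Fk]|/forallNP Ffin] := pselect (exists k, box_content (F k) = +oo).
    by rewrite (nneseries_pinfty (fun k' _ => box_content_ge0 (F k')) isT Fk) leey.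
  have Fbox k : exists ab : 'rV[R]_n * 'rV[R]_n, box R n ab.1 ab.2 = F k.
    apply: contrapT => nobox; apply: (Ffin k); rewrite /box_content.
    rewrite (_ : [set _ | _ in _] = set0) ?ereal_inf0 //.
    by apply/seteqP; split => // _ [ab eqab <-]; apply: nobox; exists ab.
  have [ab abF] := choice Fbox.
  apply: ereal_inf_lbound; exists (fun k => (ab k).1, fun k => (ab k).2).
    by move=> z /AF [k _ Fkz]; exists k => //=; rewrite abF.
  by apply: eq_eseriesr => k _; rewrite -abF box_contentE.
apply: le_ereal_inf_tmp => _ [ab cover <-]; apply: ereal_inf_lbound.
exists (fun k => box R n (ab.1 k) (ab.2 k)); first by split => // k; exact: sub_sigma_algebra.
by apply: eq_eseriesr => k _; rewrite box_contentE.
Qed.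

Lemma lebesgue_outer0 : lebesgue_outer R n set0 = 0.
Proof. by rewrite lebesgue_outerE; exact: mu_ext0 box_content0 box_content_ge0. Qed.

Lemma lebesgue_outer_ge0 A : 0 <= lebesgue_outer R n A.
Proof. by rewrite lebesgue_outerE; exact: (mu_ext_ge0 box_content_ge0 A). Qed.

Lemma le_lebesgue_outer : {homo lebesgue_outer R n : A B / A `<=` B >-> A <= B}.
Proof.
by move=> A B AB; rewrite lebesgue_outerE; exact: (@le_mu_ext _ _ _ box_content A B AB).
Qed.

Lemma lebesgue_outer_sigma_subadditive : sigma_subadditive (lebesgue_outer R n).
Proof.
by move=> F; rewrite lebesgue_outerE; exact: (mu_ext_sigma_subadditive box_content_ge0 F).
Qed.

Definition lebesgue_outer_measure : {outer_measure set 'rV[R]_n -> \bar R} :=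
  HB.pack (lebesgue_outer R n) (isOuterMeasure.Build R _ (lebesgue_outer R n)
    lebesgue_outer0 lebesgue_outer_ge0 le_lebesgue_outer lebesgue_outer_sigma_subadditive).

End lebesgue_outer_measure.

Section borel_caratheodory.
Variables (R : realType) (n : nat).
Hypothesis n_gt0 : (0 < n)%N.
Local Notation mu := (lebesgue_outer_measure R n n_gt0).

Definition halfspace (i : 'I_n) (c : R) : set 'rV[R]_n := [set z | z ord0 i < c].

Lemma halfspace_caratheodory i c : mu.-cara.-measurable (halfspace i c).
Proof.
apply: le_caratheodory_measurable => X /=.
apply: le_ereal_inf_tmp => _ [ab Xab <-].
pose below k := row_upd (ab.2 k) i (Num.min (ab.2 k ord0 i) c).
pose above k := row_upd (ab.1 k) i (Num.max (ab.1 k ord0 i) c).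
have le_below : (lebesgue_outer R n (X `&` halfspace i c) <=
    \sum_(0 <= k <oo) (box_vol R n (ab.1 k) (below k))%:E)%E.
  apply: ereal_inf_lbound; exists (ab.1, below) => // z [/Xab [k _ abz] zc].
  exists k => // j; rewrite mxE; case: eqP => [->|_]; last exact: abz.
  by have /andP[-> zb] := abz i; rewrite lt_min zb.
have le_above : (lebesgue_outer R n (X `&` ~` halfspace i c) <=
    \sum_(0 <= k <oo) (box_vol R n (above k) (ab.2 k))%:E)%E.
  apply: ereal_inf_lbound; exists (above, ab.2) => // z [/Xab [k _ abz] zc].
  exists k => // j; rewrite mxE; case: eqP => [->|_]; last exact: abz.
  have /andP[az ->] := abz i; rewrite andbT ge_max az leNgt /=; exact/negP.
apply: le_trans (leeD le_below le_above) _.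
rewrite -nneseriesD => [|k _ _|k _ _]; try by rewrite lee_fin box_vol_ge0.
rewrite (@eq_eseriesr _ _ (fun k => (box_vol R n (ab.1 k) (ab.2 k))%:E)) // => k _.
by rewrite -EFinD -box_vol_split.
Qed.

Lemma box_caratheodory a b : mu.-cara.-measurable (box R n a b).
Proof.
have -> : box R n a b = \bigcap_i (~` halfspace i (a ord0 i) `&` halfspace i (b ord0 i)).
  apply/seteqP; split => [z abz i _|z abz i].
    by have /andP[az zb] := abz i; split => //; apply/negP; rewrite -leNgt.
  by have [/negP] := abz i I; rewrite -leNgt => -> ->.
rewrite -[X in measurable X]setCK setC_bigcap; apply: measurableC.
apply: countable_bigcupT_measurable => [|i]; first exact: countableP.
rewrite setCI setCK; apply: measurableU; last apply: measurableC;
  exact: halfspace_caratheodory.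
Qed.

Lemma open_rat_box [U : set 'rV[R]_n] [z] : open U -> U z ->
  exists pq : 'rV[rat]_n * 'rV[rat]_n,
    box R n (map_mx ratr pq.1) (map_mx ratr pq.2) z /\
    box R n (map_mx ratr pq.1) (map_mx ratr pq.2) `<=` U.
Proof.
rewrite openE => /[apply] -[V nbhsV VU].
have coord j : exists pq : rat * rat, [/\ ratr pq.1 <= z ord0 j, z ord0 j < ratr pq.2 &
    forall w, ratr pq.1 <= w < ratr pq.2 -> V ord0 j w].
  have /nbhs_ballP [e /= e0 ballV] := nbhsV ord0 j.
  have [p] := @rat_in_itvoo R (z ord0 j - e) (z ord0 j) ltac:(by rewrite ltrBlDr ltrDl).
  rewrite in_itv /= => /andP [ep pz].
  have [q] := @rat_in_itvoo R (z ord0 j) (z ord0 j + e) ltac:(by rewrite ltrDl).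
  rewrite in_itv /= => /andP [zq qe].
  exists (p, q); split => /= [||w /andP [pw wq]]; [exact: ltW | exact: zq |].
  by apply: ballV; rewrite -ball_normE /= ltr_norml; apply/andP; split; lra.
have [f hf] := choice coord.
exists (\row_j (f j).1, \row_j (f j).2); split => [j|w pqw].
  by rewrite !mxE; have [-> -> _] := hf j.
apply: VU => i j; rewrite (ord1 i); have [_ _] := hf j; apply.
by have := pqw j; rewrite !mxE.
Qed.

Lemma open_caratheodory U : open U -> mu.-cara.-measurable U.
Proof.
move=> oU; pose rbox (pq : 'rV[rat]_n * 'rV[rat]_n) :=
  box R n (map_mx ratr pq.1) (map_mx ratr pq.2).
have -> : U = \bigcup_(pq in [set pq | rbox pq `<=` U]) rbox pq.
  apply/seteqP; split => [z Uz|z [pq sub]]; last exact: sub.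
  by have [pq [zpq sub]] := open_rat_box oU Uz; exists pq.
rewrite bigcup_mkcond; apply: countable_bigcupT_measurable => [|pq].
  exact: countableP.
by case: ifP => _; [exact: box_caratheodory | exact: measurable0].
Qed.

Lemma borel_lebesgue_measurable A : borel_set _ A -> lebesgue_measurable R n A.
Proof.
move=> borelA; apply: (smallest_sub (sigma_algebra_measurable (caratheodory_type mu))) borelA.
exact: open_caratheodory.
Qed.

End borel_caratheodory.

Theorem lemma9 (R : realType) (d : nat) (hd : (0 < d)%N) (x y : 'rV[R]_d) :
  coanalytic ('rV[R]_d * 'rV[R]_d)%type (Pi R d) /\
  coanalytic 'rV[R]_d (Pi_hfib R d y) /\
  coanalytic 'rV[R]_d (Phi R d x) /\
  lebesgue_measurable2 R d (Pi R d) /\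
  lebesgue_measurable R d (Pi_hfib R d y) /\
  lebesgue_measurable R d (Phi R d x).
Proof.
have borel_Pi : borel_set _ (Pi R d).
  by rewrite -[Pi R d]setCK; apply: borel_setC; exact: borel_set_setC_Pi.
have borel_hfib : borel_set _ (Pi_hfib R d y).
  apply: borel_set_preimage borel_Pi.
  by apply: continuous_pair => [t|]; [exact: cvg_id | exact: cst_continuous].
have borel_Phi : borel_set _ (Phi R d x).
  apply: borel_set_preimage borel_Pi.
  by apply: continuous_pair => [|t]; [exact: cst_continuous | exact: cvg_id].
have borel_Pi2 : borel_set _ [set z : 'rV[R]_(d + d) | Pi R d (lsubmx z, rsubmx z)].
  apply: borel_set_preimage borel_Pi.
  by apply: continuous_pair; [exact: continuous_lsubmx | exact: continuous_rsubmx].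
have dd_gt0 : (0 < d + d)%N by rewrite addn_gt0 hd.
do 3 (split; first by apply: borel_analytic; exact: borel_setC).
split; first exact: borel_lebesgue_measurable.
by split; exact: borel_lebesgue_measurable.
Qed.
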